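(* Let $d$ be odd and $s$ even with $s\mid d-1$, and let $G=\langle\tau\rangle\rtimes\langle\sigma\rangle$ with $\tau$ of order $d$, $\sigma$ of order $s$, conjugation by $\sigma$ an automorphism of $\langle\tau\rangle$ of order exactly $s$, and $\sigma^{s/2}\tau\sigma^{-s/2}=\tau^{-1}$. With the left ideals $M_1,\dots,M_4$ of $\mathbb{Z}[G]$ and the maps $d_i,h_i$ defined in the context: (1) the sequence $0\to M_1\xrightarrow{d_1}M_2\xrightarrow{d_2}M_3\xrightarrow{d_3}M_4\to0$ is exact; (2) $h_2$ is a well-defined $\mathbb{Z}[G]$-module homomorphism; (3) the prism conditions hold at all four modules: $h_1d_1=d\cdot\mathrm{id}_{M_1}$, $d_1h_1+h_2d_2=d\cdot\mathrm{id}_{M_2}$, $d_2h_2+h_3d_3=d\cdot\mathrm{id}_{M_3}$, $d_3h_3=d\cdot\mathrm{id}_{M_4}$.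
   Context: $\theta_j\in\{1,\dots,d-1\}$ by $\sigma^j\tau\sigma^{-j}=\tau^{\theta_j}$. In $\mathbb{Z}[G]$: $T_\tau=\sum_{i=0}^{d-1}\tau^i$, $T_\sigma=\sum_{j=0}^{s-1}\sigma^j$, $\mathcal{B}=(1-\sigma^{s/2})\tau^{\frac{d+1}{2}}\sum_{j=0}^{\frac{s}{2}-1}(\sum_{i=0}^{\theta_j-1}\tau^i)\sigma^j$. Left ideals (left $\mathbb{Z}[G]$-modules): $M_1=\mathbb{Z}[G]T_\sigma T_\tau$, $M_2=\mathbb{Z}[G]T_\sigma$, $M_3=\mathbb{Z}[G]\mathcal{B}$, $M_4=\mathbb{Z}[G]\mathcal{B}T_\tau$. Maps: $d_1:M_1\to M_2$ inclusion; $d_2:M_2\to M_3$, $x\mapsto x(1-\tau)$ (note $T_\sigma(1-\tau)\in\mathbb{Z}[G]\mathcal{B}$); $d_3:M_3\to M_4$, $x\mapsto xT_\tau$; $h_1:M_2\to M_1$, $x\mapsto xT_\tau$; $h_2:M_3\to M_2$, $h_2(x\mathcal{B})=x\sum_{i=0}^{d-1}(\frac{d-1}{2}-i)\tau^{i}\tau^{\frac{d+1}{2}}T_\sigma$ for $x\in\mathbb{Z}[G]$; $h_3:M_4\to M_3$ inclusion. *)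

From HB Require Import structures.
From mathcomp Require Import all_boot all_order all_algebra all_fingroup.
Set Implicit Arguments. Unset Strict Implicit. Unset Printing Implicit Defensive.
Import GRing.Theory.
Local Open Scope ring_scope.

(* The integral group ring Z[gT] of a finite group gT: integer-valued
   functions on gT, with pointwise addition (the zmodType structure of
   {ffun gT -> int}) and convolution product. *)
Definition ZG (gT : finGroupType) := {ffun gT -> int}.

Definition gbasis (gT : finGroupType) (g : gT) : ZG gT :=
  [ffun x => ((x == g) : nat)%:Z].

Definition gr_mul (gT : finGroupType) (a b : ZG gT) : ZG gT :=
  [ffun g => \sum_(h : gT) a h * b (h^-1 * g)%g].

Notation "a ** b" := (gr_mul a b) (at level 40, left associativity).

Definition inLI (gT : finGroupType) (x a : ZG gT) : Prop :=
  exists y : ZG gT, a = y ** x.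

Section Elements.
Variables (gT : finGroupType) (tau sigma : gT) (d s : nat) (theta : nat -> nat).

Definition Ttau : ZG gT := \sum_(i < d) gbasis (tau ^+ i)%g.
Definition Tsig : ZG gT := \sum_(j < s) gbasis (sigma ^+ j)%g.
Definition Bel : ZG gT :=
  (gbasis 1%g - gbasis (sigma ^+ s./2)%g) **
  (gbasis (tau ^+ (d.+1)./2)%g **
   \sum_(j < s./2) ((\sum_(i < theta j) gbasis (tau ^+ i)%g) ** gbasis (sigma ^+ j)%g)).
(* C = sum_{i<d} ((d-1)/2 - i) tau^i tau^{(d+1)/2} T_sigma, so h2(xB) = xC *)
Definition Cel : ZG gT :=
  \sum_(i < d) ((gbasis (tau ^+ i)%g ** gbasis (tau ^+ (d.+1)./2)%g ** Tsig)
                   *~ (((d.-1)./2)%:Z - i%:Z)).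
End Elements.

From HB Require Import structures.
From mathcomp Require Import all_boot all_order all_algebra all_fingroup cyclic zify.
From Stdlib Require Import ClassicalEpsilon.
Set Implicit Arguments. Unset Strict Implicit. Unset Printing Implicit Defensive.
Import GRing.Theory Num.Theory.
Local Open Scope ring_scope.

(* Write t, w, th for the images of tau, sigma^(s/2), tau^((d+1)/2) in Z[G],
   T, Ts for the norm elements of <tau>, <sigma>, and
   W = sum_(i < d) ((d-1)/2 - i) tau^i, so that C = W th Ts.  Everything rests
   on three identities
     Ts (1 - t) = -(1 + w) th B,   C (1 - t) = (d - T) B,
     -(1 + w) th C = (d - T) Ts,
   which follow from the weighted telescoping sum (1 - t) W = d - T, from
   th^2 = t and th w th = w, and from w t W = - W w (conjugation by w inverts
   tau, and the weights of W are antisymmetric about (d-1)/2).  T is central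
   because <tau> is normal.  An element fixed by right multiplication by tau
   and sigma is an integer multiple of Ts T; comparing augmentations (that of
   W, hence of C, vanishes) gives x B = 0 -> x C = 0, so h2 is well defined.
   Exactness at M3 divides by d: if f is sigma-invariant with f (1 - t) = d a,
   the values of f on <tau> are congruent mod d, and since every element of G
   is uniquely tau^i sigma^j this puts a in Z[G] Ts (1 - t). *)

Section Convolution.
Variable gT : finGroupType.
Implicit Types a b c : ZG gT.

Lemma gr_mulA : associative (@gr_mul gT).
Proof.
move=> a b c; apply/ffunP => x; rewrite !ffunE.
under eq_bigr => k _ do rewrite ffunE big_distrr /=.
under [RHS]eq_bigr => k _ do rewrite ffunE big_distrl /=.
rewrite [RHS]exchange_big /=; apply: eq_bigr => h _.
rewrite [RHS](reindex_inj (mulgI h)) /=.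
by apply: eq_bigr => k _; rewrite mulKg mulrA invMg mulgA.
Qed.

Lemma gr_mul1r : left_id (gbasis 1) (@gr_mul gT).
Proof.
move=> a; apply/ffunP => x; rewrite ffunE (bigD1 1%g) //= ffunE eqxx invg1 mul1g mul1r.
by rewrite big1 ?addr0 // => h /negPf nh; rewrite ffunE nh mul0r.
Qed.

Lemma gr_mulr1 : right_id (gbasis 1) (@gr_mul gT).
Proof.
move=> a; apply/ffunP => x; rewrite ffunE (bigD1 x) //= ffunE mulVg eqxx mulr1.
by rewrite big1 ?addr0 // => h nh; rewrite ffunE -eq_mulVg1 (negPf nh) mulr0.
Qed.

Lemma gr_mulDl : left_distributive (@gr_mul gT) +%R.
Proof.
move=> a b c; apply/ffunP => x; rewrite !ffunE -big_split /=.
by apply: eq_bigr => h _; rewrite ffunE mulrDl.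
Qed.

Lemma gr_mulDr : right_distributive (@gr_mul gT) +%R.
Proof.
move=> a b c; apply/ffunP => x; rewrite !ffunE -big_split /=.
by apply: eq_bigr => h _; rewrite ffunE mulrDr.
Qed.

End Convolution.

(* [{ffun gT -> int}] already carries the pointwise ring structure, so the
   convolution ring is declared on an alias. *)
Definition group_ring (gT : finGroupType) := ZG gT.
HB.instance Definition _ (gT : finGroupType) := GRing.Zmodule.on (group_ring gT).
HB.instance Definition _ (gT : finGroupType) :=
  GRing.Zmodule_isPzRing.Build (group_ring gT) (@gr_mulA gT) (@gr_mul1r gT)
    (@gr_mulr1 gT) (@gr_mulDl gT) (@gr_mulDr gT).

(* [gbasis g] typed in [group_ring gT], so that ring operations on it use the
   convolution product. *)
Definition gelem (gT : finGroupType) (g : gT) : group_ring gT := gbasis g.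

Definition augmentation (gT : finGroupType) (a : group_ring gT) : int := \sum_x a x.

Definition cyc_sum (gT : finGroupType) (g : gT) (n : nat) : group_ring gT :=
  \sum_(i < n) gelem (g ^+ i)%g.

Definition in_lideal (gT : finGroupType) (x a : group_ring gT) : Prop :=
  exists y, a = y * x.

Section GroupRingTheory.
Variable gT : finGroupType.
Local Notation R := (group_ring gT).
Implicit Types (a b : R) (g h x : gT).

Lemma mulrE a b x : (a * b) x = \sum_h a h * b (h^-1 * x)%g.
Proof. by rewrite ffunE. Qed.

Lemma gelemE g x : gelem g x = (x == g)%:Z.
Proof. by rewrite ffunE. Qed.

Lemma gelem1 : gelem 1 = 1 :> R.
Proof. by []. Qed.

Lemma mulr_gelemE a g x : (a * gelem g) x = a (x * g^-1)%g.
Proof.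
rewrite mulrE (bigD1 (x * g^-1)%g) //= gelemE invMg invgK mulgKV eqxx mulr1.
rewrite big1 ?addr0 // => h nh; rewrite gelemE.
case: eqP => [hxg|_]; last by rewrite mulr0.
by rewrite -hxg invMg invgK mulVKg eqxx in nh.
Qed.

Lemma gelem_mulrE g a x : (gelem g * a) x = a (g^-1 * x)%g.
Proof.
rewrite mulrE (bigD1 g) //= gelemE eqxx mul1r.
by rewrite big1 ?addr0 // => h /negPf nh; rewrite gelemE nh mul0r.
Qed.

Lemma gelemM g h : gelem g * gelem h = gelem (g * h)%g.
Proof.
by apply/ffunP => x; rewrite gelem_mulrE !gelemE (can2_eq (mulVKg g) (mulKg g)).
Qed.

Lemma gelemX g n : gelem g ^+ n = gelem (g ^+ n)%g.
Proof. by elim: n => [|n IHn]; rewrite ?expgS ?exprS -?gelemM ?IHn. Qed.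

Lemma mulr_gelem_idXE a g n x : a * gelem g = a -> a (x * g ^+ n)%g = a x.
Proof.
move=> ag_a; elim: n => [|n IHn]; first by rewrite expg0 mulg1.
by rewrite -{1}ag_a mulr_gelemE expgSr mulgA mulgK.
Qed.

Lemma gelemX_comm g m n : GRing.comm (gelem (g ^+ m)%g) (gelem (g ^+ n)%g).
Proof. by rewrite /GRing.comm !gelemM -!expgD addnC. Qed.

Lemma mulrn_group_ringI n : (0 < n)%N -> injective (fun a : R => a *+ n).
Proof.
move=> n_gt0 a b /ffunP eq_ab; apply/ffunP => x.
by have := eq_ab x; rewrite !ffunMnE => /(pmulrnI n_gt0).
Qed.

Lemma augmentation_is_zmod_morphism : zmod_morphism (@augmentation gT).
Proof. by move=> a b; rewrite /augmentation -sumrB; apply: eq_bigr => x _; rewrite !ffunE. Qed.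

Lemma augmentation_gelem g : augmentation (gelem g) = 1.
Proof.
by rewrite /augmentation (bigD1 g) //= gelemE eqxx big1 // => x /negPf nx; rewrite gelemE nx.
Qed.

Lemma augmentation_is_monoid_morphism : monoid_morphism (@augmentation gT).
Proof.
split=> [|a b]; first exact: augmentation_gelem.
rewrite /augmentation big_distrl /=.
under eq_bigr => x _ do rewrite mulrE.
rewrite exchange_big /=; apply: eq_bigr => h _; rewrite -big_distrr /=.
by rewrite (reindex_inj (mulgI h)) /=; under eq_bigr => x _ do rewrite mulKg.
Qed.

End GroupRingTheory.

HB.instance Definition _ (gT : finGroupType) :=
  GRing.isZmodMorphism.Build (group_ring gT) int (@augmentation gT)
    (@augmentation_is_zmod_morphism gT).
HB.instance Definition _ (gT : finGroupType) :=
  GRing.isMonoidMorphism.Build (group_ring gT) int (@augmentation gT)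
    (@augmentation_is_monoid_morphism gT).

Lemma sum_weight_rev (V : zmodType) (n c : nat) (F : nat -> V) : n = c.*2.+1 ->
  \sum_(i < n) F (n - i.+1)%N *~ (c%:Z - i%:Z) = - \sum_(i < n) F i *~ (c%:Z - i%:Z).
Proof.
move=> n_eq; rewrite (reindex_inj rev_ord_inj) -sumrN; apply: eq_bigr => i _ /=.
have lt_in := ltn_ord i; rewrite (_ : n - (n - i.+1).+1 = i)%N -?mulrNz; last by lia.
by congr (_ *~ _); lia.
Qed.

Section CyclicSums.
Variable gT : finGroupType.
Local Notation R := (group_ring gT).
Implicit Types (a : R) (g x : gT).

Lemma cyc_sum_augmentation g n : augmentation (cyc_sum g n) = n%:Z.
Proof.
rewrite rmorph_sum /=; under eq_bigr => i _ do rewrite augmentation_gelem.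
by rewrite sumr_const card_ord natz.
Qed.

Lemma cyc_sumD g m n :
  cyc_sum g (m + n) = cyc_sum g m + gelem (g ^+ m)%g * cyc_sum g n.
Proof.
rewrite /cyc_sum big_split_ord /= mulr_sumr; congr (_ + _).
by apply: eq_bigr => i _; rewrite gelemM -expgD.
Qed.

Lemma cyc_sum_telescope g n : (1 - gelem g) * cyc_sum g n = 1 - gelem (g ^+ n)%g.
Proof.
elim: n => [|n IHn]; first by rewrite /cyc_sum big_ord0 mulr0 expg0 subrr.
by rewrite -addn1 cyc_sumD mulrDr IHn /cyc_sum big_ord1 mulrA mulrBl mul1r
  gelemM -expgS mulr1 addn1 addrA subrK.
Qed.

Lemma gelemX_cyc_sum_comm g n k : GRing.comm (gelem (g ^+ k)%g) (cyc_sum g n).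
Proof. by apply: commr_sum => i _; apply: gelemX_comm. Qed.

Lemma cyc_sum_orderE g x : cyc_sum g #[g]%g x = (x \in <[g]>%g)%:Z.
Proof.
rewrite /cyc_sum sum_ffunE; under eq_bigr => i _ do rewrite gelemE.
case: (boolP (x \in <[g]>%g)) => [/cyclePmin[k lt_k ->] | not_x]; last first.
  by rewrite big1 // => i _; case: eqP => // x_eq; rewrite x_eq mem_cycle in not_x.
rewrite (bigD1 (Ordinal lt_k)) //= eqxx big1 ?addr0 // => i neq_ik.
by rewrite (eq_expg_ord (Ordinal lt_k) i) // eq_sym (negPf neq_ik).
Qed.

Lemma cyc_sum_order_central g a : (<[g]> <| [set: gT])%g ->
  cyc_sum g #[g]%g * a = a * cyc_sum g #[g]%g.
Proof.
move=> /normal_norm nGg; apply/ffunP => x; rewrite !mulrE.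
have inj_xV : injective (fun h => x * h^-1)%g by move=> h1 h2 /mulgI /invg_inj.
rewrite (reindex_inj inj_xV) /=; apply: eq_bigr => h _.
rewrite invMg invgK mulgKV mulrC !cyc_sum_orderE; congr (_ * _%:Z).
have -> : (h^-1 * x = (x * h^-1) ^ h)%g by rewrite conjgE !mulgA mulgKV.
rewrite memJ_norm //.
by apply: (subsetP nGg); rewrite inE.
Qed.

Section Periodic.
Variables (g : gT) (n : nat).
Hypothesis gn1 : (g ^+ n = 1)%g.

Lemma cyc_sum_mulr_gelem : cyc_sum g n * gelem g = cyc_sum g n.
Proof.
case: n gn1 => [|m] gm1; first by rewrite /cyc_sum big_ord0 mul0r.
rewrite /cyc_sum mulr_suml; under eq_bigr => i _ do rewrite gelemM -expgSr.
by rewrite big_ord_recr /= gm1 [RHS]big_ord_recl /= expg0 addrC.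
Qed.

Lemma cyc_sum_mulr_gelemX k : cyc_sum g n * gelem (g ^+ k)%g = cyc_sum g n.
Proof.
by rewrite -gelemX; elim: k => [|k IHk]; rewrite ?mulr1 // exprS mulrA cyc_sum_mulr_gelem.
Qed.

Lemma gelemX_mulr_cyc_sum k : gelem (g ^+ k)%g * cyc_sum g n = cyc_sum g n.
Proof. by rewrite gelemX_cyc_sum_comm cyc_sum_mulr_gelemX. Qed.

Lemma cyc_sum_sqr : cyc_sum g n * cyc_sum g n = cyc_sum g n *+ n.
Proof.
rewrite {1}/cyc_sum mulr_suml; under eq_bigr => i _ do rewrite gelemX_mulr_cyc_sum.
by rewrite sumr_const card_ord.
Qed.

Lemma weighted_cyc_sum_telescope (c : int) :
  (1 - gelem g) * \sum_(i < n) gelem (g ^+ i)%g *~ (c - i%:Z) = n%:R - cyc_sum g n.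
Proof.
case: n gn1 => [|m] gm1; first by rewrite /cyc_sum !big_ord0 mulr0 subrr.
rewrite mulr_sumr.
under eq_bigr => i _ do rewrite mulrzAr mulrBl mul1r gelemM -expgS mulrzBl.
rewrite sumrB big_ord_recl big_ord_recr /= gm1 expg0 /cyc_sum big_ord_recl /= expg0 gelem1.
rewrite /bump /=; under eq_bigr => i _ do rewrite add1n.
under [in X in _ = _ - X]eq_bigr => i _ do rewrite add1n.
set S := \sum_(i < m) gelem (g ^+ i.+1)%g.
have -> : \sum_(i < m) gelem (g ^+ i.+1)%g *~ (c - i.+1%:Z) =
          \sum_(i < m) gelem (g ^+ i.+1)%g *~ (c - i%:Z) - S.
  rewrite -sumrB; apply: eq_bigr => i _.
  by rewrite -{3}[gelem _]mulr1z -mulrzBr; congr (_ *~ _); lia.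
rewrite [_ - S]addrC addrA addrKA addrAC opprD addrA -natr1 addrK -intrB.
by rewrite (_ : c - 0 - (c - m%:Z) = m%:Z) //; lia.
Qed.

End Periodic.
End CyclicSums.

Section PrismComplex.
Variables (gT : finGroupType) (tau sigma : gT) (d s : nat) (theta : nat -> nat).
Hypotheses (Hd_odd : odd d) (Hs_even : ~~ odd s)
  (Htau : #[tau]%g = d) (Hsigma : #[sigma]%g = s)
  (Hsdprod : (<[tau]> ><| <[sigma]>)%g = [set: gT])
  (Hhalf : (sigma ^+ s./2 * tau * (sigma ^+ s./2)^-1 = tau^-1)%g)
  (Htheta : forall j : nat, (0 < theta j < d)%N /\
      (sigma ^+ j * tau * (sigma ^+ j)^-1 = tau ^+ theta j)%g).

Local Notation R := (group_ring gT).
Local Notation K := (d.-1)./2.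
Local Notation t := (gelem tau).
Local Notation w := (gelem (sigma ^+ s./2)%g).
Local Notation th := (gelem (tau ^+ (d.+1)./2)%g).
Local Notation T := (cyc_sum tau d).
Local Notation Ts := (cyc_sum sigma s).
Let W : R := \sum_(i < d) gelem (tau ^+ i)%g *~ (K%:Z - i%:Z).
Let Sx : R := \sum_(j < s./2) cyc_sum tau (theta j) * gelem (sigma ^+ j)%g.
Let B : R := Bel tau sigma d s theta.
Let C : R := Cel tau sigma d s.

Lemma BE : B = (1 - w) * (th * Sx).
Proof. by []. Qed.

Lemma CE : C = W * th * Ts.
Proof.
rewrite (_ : C = \sum_(i < d) (gelem (tau ^+ i)%g * th * Ts) *~ (K%:Z - i%:Z)) //.
by rewrite /W !mulr_suml; apply: eq_bigr => i _; rewrite !mulrzAl.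
Qed.

Lemma d_eq : d = K.*2.+1.
Proof. by have := odd_double_half d; rewrite Hd_odd add1n => <-; rewrite /= half_double. Qed.

Lemma half_dS : (d.+1)./2 = K.+1.
Proof. by rewrite {1}d_eq -doubleS half_double. Qed.

Lemma s_eq : s = (s./2 + s./2)%N.
Proof. by rewrite addnn -[s in LHS]odd_double_half (negPf Hs_even). Qed.

Lemma d_gt0 : (0 < d)%N.
Proof. by rewrite d_eq. Qed.

Lemma s_gt0 : (0 < s)%N.
Proof. by rewrite -Hsigma order_gt0. Qed.

Lemma tau_d : (tau ^+ d = 1)%g.
Proof. by rewrite -Htau expg_order. Qed.

Lemma sigma_s : (sigma ^+ s = 1)%g.
Proof. by rewrite -Hsigma expg_order. Qed.

Lemma half_mul_tauX k : (k <= d)%N ->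
  (sigma ^+ s./2 * tau ^+ k = tau ^+ (d - k) * sigma ^+ s./2)%g.
Proof.
move=> le_kd; have conj_tauX : ((tau ^+ k) ^ (sigma ^+ s./2)^-1 = tau ^+ (d - k))%g.
  rewrite conjXg conjgE invgK mulgA Hhalf expgVn; apply/eqP.
  by rewrite eq_invg_mul -expgD subnKC // tau_d.
by rewrite -conj_tauX conjgE invgK mulgA mulgKV.
Qed.

Lemma tauX_theta j : (tau ^+ theta j * sigma ^+ j = sigma ^+ j * tau)%g.
Proof. by have [_ <-] := Htheta j; rewrite mulgKV. Qed.

Lemma ww : w * w = 1.
Proof. by rewrite gelemM -expgD -s_eq sigma_s. Qed.

Lemma thth : th * th = t.
Proof.
rewrite gelemM -expgD half_dS (_ : K.+1 + K.+1 = d + 1)%N; last by rewrite d_eq; lia.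
by rewrite expgD tau_d mul1g.
Qed.

Lemma w_tauX k : (k <= d)%N -> w * gelem (tau ^+ k)%g = gelem (tau ^+ (d - k))%g * w.
Proof. by move=> le_kd; rewrite !gelemM half_mul_tauX. Qed.

Lemma thwth : th * w * th = w.
Proof.
rewrite -mulrA w_tauX; last by rewrite half_dS d_eq; lia.
by rewrite mulrA gelemM -expgD subnKC ?tau_d ?gelem1 ?mul1r // half_dS d_eq; lia.
Qed.

Lemma wTs : w * Ts = Ts.
Proof. exact: gelemX_mulr_cyc_sum sigma_s _. Qed.

Lemma wB : w * B = - B.
Proof. by rewrite BE mulrA mulrBr mulr1 ww -opprB mulNr. Qed.

Lemma Tsig_1subtau : Ts * (1 - t) = - ((1 + w) * th) * B.
Proof.
have th_1w_th : th * (1 - w) * th = t - w by rewrite mulrBr mulr1 mulrBl thth thwth.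
have Ts_half : (1 + w) * cyc_sum sigma s./2 = Ts by rewrite [in RHS]s_eq cyc_sumD mulrDl mul1r.
have Sx_1subtau : (1 - t) * Sx = cyc_sum sigma s./2 * (1 - t).
  rewrite /Sx mulr_sumr /cyc_sum mulr_suml; apply: eq_bigr => j _.
  by rewrite mulrA cyc_sum_telescope mulrBl mul1r gelemM tauX_theta -gelemM mulrBr mulr1.
have w_twisted : (1 + w) * (t - w) = - ((1 + w) * (1 - t)).
  apply/eqP; rewrite -subr_eq0 opprK -mulrDr [t - w + _]addrC addrA subrK.
  by rewrite mulrDl mul1r mulrBr mulr1 ww addrA subrK subrr.
rewrite (_ : _ * B = - ((1 + w) * (th * (1 - w) * th) * Sx)); last first.
  by rewrite BE !mulNr !mulrA.
by rewrite th_1w_th w_twisted mulNr opprK -mulrA Sx_1subtau mulrA Ts_half.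
Qed.

Lemma tauX_W_comm k : GRing.comm (gelem (tau ^+ k)%g) W.
Proof. by apply: commr_sum => i _; apply/commrMz/gelemX_comm. Qed.

Lemma t_W_comm : GRing.comm t W.
Proof. by have := tauX_W_comm 1; rewrite expg1. Qed.

Lemma W_telescope : (1 - t) * W = d%:R - T.
Proof. exact: weighted_cyc_sum_telescope tau_d _. Qed.

Lemma W_1subtau : W * (1 - t) = d%:R - T.
Proof. by rewrite (commrB (commr1 W) (commr_sym t_W_comm)) W_telescope. Qed.

Lemma w_t_W : w * (t * W) = - (W * w).
Proof.
rewrite /W !mulr_sumr -mulNr -(sum_weight_rev (fun j => gelem (tau ^+ j)%g) d_eq).
rewrite mulr_suml; apply: eq_bigr => i _.
by rewrite !mulrzAr mulrzAl [t * _]gelemM -expgS w_tauX.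
Qed.

Lemma augmentation_W : augmentation W = 0.
Proof.
have W_rev := sum_weight_rev (fun _ => 1 : int) d_eq.
rewrite /W rmorph_sum /=; under eq_bigr => i _ do rewrite rmorphMz /= augmentation_gelem.
by apply/eqP; rewrite -eqNr -W_rev.
Qed.

Lemma C_1subtau : C * (1 - t) = (d%:R - T) * B.
Proof.
have th_Y_th : th * ((1 + w) * th) = t + w by rewrite mulrDl mul1r mulrDr thth mulrA thwth.
rewrite CE -[_ * (1 - t)]mulrA Tsig_1subtau mulNr mulrN mulrA -(mulrA W) th_Y_th.
rewrite mulrDr mulrDl -(mulrA W w) wB mulrN opprD opprK [LHS]addrC.
by rewrite -W_1subtau mulrBr mulr1 mulrBl.
Qed.

Lemma oneDw_th_C : - ((1 + w) * th) * C = (d%:R - T) * Ts.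
Proof.
rewrite CE mulNr -!mulrA (mulrA th W) tauX_W_comm -(mulrA W) (mulrA th) thth.
rewrite mulrDl mul1r (mulrA W) -t_W_comm (mulrA w) w_t_W mulNr -(mulrA W w) wTs.
by rewrite opprD opprK addrC -W_telescope !mulrBl !mul1r.
Qed.

Lemma tau_normal : (<[tau]> <| [set: gT])%g.
Proof. by have [] := sdprod_context Hsdprod. Qed.

Lemma T_central a : T * a = a * T.
Proof. by have := cyc_sum_order_central a tau_normal; rewrite Htau. Qed.

Lemma sdprod_coord x : exists (a : 'I_d) (b : 'I_s), x = (tau ^+ a * sigma ^+ b)%g.
Proof.
have [_ _ tau_sigma _ _] := sdprod_context Hsdprod.
have : x \in (<[tau]> * <[sigma]>)%g by rewrite tau_sigma inE.
case/mulsgP=> y z /cyclePmin[a lt_a ->] /cyclePmin[b lt_b ->] ->.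
by rewrite Htau in lt_a; rewrite Hsigma in lt_b; exists (Ordinal lt_a), (Ordinal lt_b).
Qed.

Lemma sdprod_coord_inj (a a' : 'I_d) (b b' : 'I_s) :
  (tau ^+ a * sigma ^+ b = tau ^+ a' * sigma ^+ b')%g -> a = a' /\ b = b'.
Proof.
have [_ _ _ _ ti_tau_sigma] := sdprod_context Hsdprod; move=> eq_ab.
have /(congr1 (divgr <[tau]> <[sigma]>)) := eq_ab.
have /(congr1 (remgr <[tau]> <[sigma]>)) := eq_ab.
rewrite !divgrMid ?remgrMid ?mem_cycle // => /eqP eq_b /eqP eq_a.
move: eq_a eq_b; rewrite !eq_expg_ord ?Htau ?Hsigma //.
by split; apply/eqP.
Qed.

Lemma TsE x : Ts x = (x \in <[sigma]>%g)%:Z.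
Proof. by rewrite -Hsigma cyc_sum_orderE. Qed.

Lemma sigma_invariant_decomp f : f * gelem sigma = f ->
  f = (\sum_(i < d) gelem (tau ^+ i)%g *~ f (tau ^+ i)%g) * Ts.
Proof.
move=> f_sigma; apply/ffunP => x; have [a [b ->]] := sdprod_coord x.
rewrite mulr_gelem_idXE // mulr_suml sum_ffunE (bigD1 a) //= big1 ?addr0 => [|i neq_ia].
  by rewrite mulrzAl ffunMzE gelem_mulrE mulKg TsE mem_cycle intz.
rewrite mulrzAl ffunMzE gelem_mulrE TsE.
case: (boolP (_ \in _)) => [/cyclePmin[c lt_c eq_c] | _]; last by rewrite mul0rz.
rewrite Hsigma in lt_c.
move/(canRL (mulKVg _)): eq_c => /(sdprod_coord_inj (b' := Ordinal lt_c))[eq_ai _].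
by rewrite eq_ai eqxx in neq_ia.
Qed.

Lemma Ts_mulr_sigma a : a * Ts * gelem sigma = a * Ts.
Proof. by rewrite -mulrA cyc_sum_mulr_gelem // sigma_s. Qed.

Lemma T_1subtau : T * (1 - t) = 0.
Proof. by rewrite mulrBr mulr1 cyc_sum_mulr_gelem ?tau_d ?subrr. Qed.

Lemma dT_central a : (d%:R - T) * a = a * (d%:R - T).
Proof. by rewrite mulrBl mulrBr T_central mulr_natl mulr_natr. Qed.

Lemma invariant_const f : f * gelem sigma = f -> f * t = f ->
  f = (f 1%g)%:~R * (Ts * T).
Proof.
move=> f_sigma f_tau; rewrite {1}(sigma_invariant_decomp f_sigma).
under eq_bigr => i _ do rewrite -{2}[(tau ^+ i)%g]mul1g mulr_gelem_idXE //.
by rewrite -mulrz_suml -[\sum_(i < d) _]/T -mulrzl -mulrA T_central.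
Qed.

Lemma sigma_invariant_lift f a : f * gelem sigma = f -> f * (1 - t) = a *+ d ->
  exists2 b, in_lideal Ts b & a = b * (1 - t).
Proof.
move=> f_sigma f_a.
have step i : f (tau ^+ i.+1)%g - f (tau ^+ i)%g = a (tau ^+ i.+1)%g *+ d.
  by rewrite -ffunMnE -f_a mulrBr mulr1 ffunE ffunE mulr_gelemE expgSr mulgK.
have dvd_f i : (d%:Z %| f (tau ^+ i)%g - f 1%g)%Z.
  elim: i => [|i IHi]; first by rewrite expg0 subrr dvdz0.
  by rewrite -(subrK (f (tau ^+ i)%g) (f _)) -addrA step rpredD // pmulrn mulrzz dvdz_mull.
pose q i := ((f (tau ^+ i)%g - f 1%g) %/ d%:Z)%Z.
exists ((\sum_(i < d) gelem (tau ^+ i)%g *~ q i) * Ts); first by eexists.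
apply: (mulrn_group_ringI d_gt0); rewrite /= -f_a {1}(sigma_invariant_decomp f_sigma).
have -> : \sum_(i < d) gelem (tau ^+ i)%g *~ f (tau ^+ i)%g =
    (\sum_(i < d) gelem (tau ^+ i)%g *~ q i) *+ d + T *~ f 1%g.
  rewrite /cyc_sum mulrz_suml -sumrMnl -big_split /=; apply: eq_bigr => i _.
  by rewrite /q pmulrn -mulrzA -mulrzDr divzK // subrK.
rewrite !mulrDl -!mulrA mulrzAl [T * _]mulrA T_central -mulrA T_1subtau.
by rewrite mulr0 mul0rz addr0 mulrnAl.
Qed.

Lemma augmentation_C : augmentation C = 0.
Proof. by rewrite CE !rmorphM /= augmentation_W !mul0r. Qed.

Lemma kerB_sub_kerC x : x * B = 0 -> x * C = 0.
Proof.
move=> xB0; set f := x * C.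
have f_sigma : f * gelem sigma = f by rewrite /f CE -!mulrA cyc_sum_mulr_gelem ?sigma_s.
have f_tau : f * t = f.
  apply/eqP; rewrite -subr_eq0 -opprB oppr_eq0 -{1}(mulr1 f) -mulrBr.
  by rewrite /f -mulrA C_1subtau mulrA -dT_central -mulrA xB0 mulr0.
have := congr1 (@augmentation gT) (invariant_const f_sigma f_tau).
rewrite {1}/f !rmorphM /= augmentation_C mulr0 rmorph_int !cyc_sum_augmentation.
move/esym/eqP; rewrite !mulf_eq0 intz => /or3P[/eqP f1_0 | /eqP s_0 | /eqP d_0].
- by rewrite (invariant_const f_sigma f_tau) f1_0 mul0r.
- by have := s_gt0; lia.
- by have := d_gt0; lia.
Qed.

(* [B] generates [M3] but need not be a free generator, so [h2] is defined
   through a chosen preimage; [kerB_sub_kerC] makes the choice irrelevant. *)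
Definition h2 (a : R) : R := epsilon (inhabits 0) (fun x => a = x * B) * C.

Lemma h2E x : h2 (x * B) = x * C.
Proof.
rewrite /h2; set y := epsilon _ _.
have xB_yB : x * B = y * B.
  by apply: (epsilon_spec (inhabits 0) (fun y => x * B = y * B)); exists x.
by apply/eqP; rewrite -subr_eq0 -mulrBl kerB_sub_kerC // mulrBl xB_yB subrr.
Qed.

Lemma prism_maps_into :
  (forall a, in_lideal (Ts * T) a -> in_lideal Ts a) /\
  (forall a, in_lideal Ts a -> in_lideal B (a * (1 - t))) /\
  (forall a, in_lideal B a -> in_lideal (B * T) (a * T)) /\
  (forall a, in_lideal Ts a -> in_lideal (Ts * T) (a * T)) /\
  (forall a, in_lideal (B * T) a -> in_lideal B a).
Proof.
split; [|split; [|split; [|split]]] => a [y ->].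
- by exists (y * T); rewrite -T_central mulrA.
- by exists (y * - ((1 + w) * th)); rewrite -mulrA Tsig_1subtau mulrA.
- by exists y; rewrite mulrA.
- by exists y; rewrite mulrA.
- by exists (y * T); rewrite -T_central mulrA.
Qed.

Lemma prism_exact :
  (forall a, in_lideal (Ts * T) a -> a = 0 -> a = 0) /\
  (forall a, in_lideal Ts a ->
     (a * (1 - t) = 0 <-> exists2 b, in_lideal (Ts * T) b & a = b)) /\
  (forall a, in_lideal B a ->
     (a * T = 0 <-> exists2 b, in_lideal Ts b & a = b * (1 - t))) /\
  (forall a, in_lideal (B * T) a -> exists2 b, in_lideal B b & a = b * T).
Proof.
split; [by [] | split; [|split]] => a [y ->].
- split=> [yTs0 | [b [z ->] ->]]; last by rewrite -!mulrA T_1subtau !mulr0.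
  have y_tau : y * Ts * t = y * Ts.
    by apply/eqP; rewrite -subr_eq0 -opprB oppr_eq0 -{1}(mulr1 (_ * Ts)) -mulrBr yTs0.
  by exists (y * Ts); rewrite // (invariant_const (Ts_mulr_sigma y) y_tau); eexists.
- split=> [yBT0 | [b [z ->] ->]]; last by rewrite -!mulrA -T_central T_1subtau !mulr0.
  apply: (@sigma_invariant_lift (y * C)); first by rewrite CE !mulrA Ts_mulr_sigma.
  by rewrite -mulrA C_1subtau mulrA -dT_central -mulrA mulrBl T_central yBT0 subr0 mulr_natl.
- by exists (y * B); [exists y | rewrite mulrA].
Qed.

Lemma prism_homotopy :
  exists h : R -> R,
    ((forall x, h (x * B) = x * C) /\
     (forall a, in_lideal B a -> in_lideal Ts (h a)) /\
     (forall r a b, in_lideal B a -> in_lideal B b -> h (r * a + b) = r * h a + h b)) /\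
    ((forall a, in_lideal (Ts * T) a -> a * T = a *+ d) /\
     (forall a, in_lideal Ts a -> a * T + h (a * (1 - t)) = a *+ d) /\
     (forall a, in_lideal B a -> h a * (1 - t) + a * T = a *+ d) /\
     (forall a, in_lideal (B * T) a -> a * T = a *+ d)).
Proof.
have TT : T * T = T *+ d by apply: cyc_sum_sqr tau_d.
exists h2; split; [split; [|split] | split; [|split; [|split]]].
- exact: h2E.
- by move=> a [x ->]; rewrite h2E CE mulrA; eexists.
- by move=> r a b [x ->] [y ->]; rewrite mulrA -mulrDl !h2E mulrDl mulrA.
- by move=> a [y ->]; rewrite -!mulrA TT !mulrnAr.
- move=> a [y ->]; rewrite -[y * Ts * (1 - t)]mulrA Tsig_1subtau mulrA h2E.
  rewrite -(mulrA y _ C) oneDw_th_C.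
  by rewrite dT_central !mulrBr mulr_natr mulrnAr mulrA addrC subrK.
- move=> a [x ->]; rewrite h2E -mulrA C_1subtau dT_central !mulrBr mulr_natr mulrnAr.
  by rewrite mulrA subrK.
- by move=> a [y ->]; rewrite -!mulrA TT !mulrnAr.
Qed.

End PrismComplex.

Unset Implicit Arguments.

Theorem theorem6p7 (gT : finGroupType) (tau sigma : gT) (d s : nat)
  (theta : nat -> nat)
  (Hd_odd : odd d) (Hs_even : ~~ odd s) (Hs_dvd : (s %| d.-1)%N)
  (Htau : #[tau]%g = d) (Hsigma : #[sigma]%g = s)
  (Hsdprod : (<[tau]> ><| <[sigma]>)%g = [set: gT])
  (Haut_order : forall k : nat, (0 < k < s)%N ->
      exists2 x : gT, x \in <[tau]>%g & (sigma ^+ k * x * (sigma ^+ k)^-1 != x)%g)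
  (Hhalf : (sigma ^+ s./2 * tau * (sigma ^+ s./2)^-1 = tau^-1)%g)
  (Htheta : forall j : nat, (0 < theta j < d)%N /\
      (sigma ^+ j * tau * (sigma ^+ j)^-1 = tau ^+ theta j)%g) :
  let T_tau := Ttau tau d in
  let T_sig := Tsig sigma s in
  let B := Bel tau sigma d s theta in
  let C := Cel tau sigma d s in
  let one := @gbasis gT 1%g in
  let M1 := inLI (T_sig ** T_tau) in
  let M2 := inLI T_sig in
  let M3 := inLI B in
  let M4 := inLI (B ** T_tau) in
  let d1 := fun a : ZG gT => a in
  let d2 := fun a : ZG gT => a ** (one - gbasis tau) in
  let d3 := fun a : ZG gT => a ** T_tau in
  let h1 := fun a : ZG gT => a ** T_tau in
  let h3 := fun a : ZG gT => a in
  (* the maps d1, d2, d3, h1, h3 land in the stated modules *)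
  ((forall a, M1 a -> M2 (d1 a)) /\ (forall a, M2 a -> M3 (d2 a)) /\
   (forall a, M3 a -> M4 (d3 a)) /\ (forall a, M2 a -> M1 (h1 a)) /\
   (forall a, M4 a -> M3 (h3 a))) /\
  (* (1) exactness of 0 -> M1 -> M2 -> M3 -> M4 -> 0 *)
  ((forall a, M1 a -> d1 a = 0 -> a = 0) /\
   (forall a, M2 a -> (d2 a = 0 <-> exists2 b, M1 b & a = d1 b)) /\
   (forall a, M3 a -> (d3 a = 0 <-> exists2 b, M2 b & a = d2 b)) /\
   (forall a, M4 a -> exists2 b, M3 b & a = d3 b)) /\
  (* (2) h2 is a well-defined Z[G]-module homomorphism M3 -> M2, and
     (3) the prism conditions hold *)
  (exists h2 : ZG gT -> ZG gT,
     ((forall x, h2 (x ** B) = x ** C) /\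
      (forall a, M3 a -> M2 (h2 a)) /\
      (forall (r a b : ZG gT), M3 a -> M3 b -> h2 (r ** a + b) = r ** h2 a + h2 b)) /\
     ((forall a, M1 a -> h1 (d1 a) = a *+ d) /\
      (forall a, M2 a -> d1 (h1 a) + h2 (d2 a) = a *+ d) /\
      (forall a, M3 a -> d2 (h2 a) + h3 (d3 a) = a *+ d) /\
      (forall a, M4 a -> d3 (h3 a) = a *+ d))).
Proof.
move=> T_tau T_sig B C one M1 M2 M3 M4 d1 d2 d3 h1 h3.
(* Neither [s %| d.-1] nor the exact order of the conjugation action is used. *)
split; [|split].
- exact: (prism_maps_into Hd_odd Hs_even Htau Hsigma Hsdprod Hhalf Htheta).
- exact: (prism_exact Hd_odd Hs_even Htau Hsigma Hsdprod Hhalf Htheta).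
- exact: (prism_homotopy Hd_odd Hs_even Htau Hsigma Hsdprod Hhalf Htheta).
Qed.
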